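(* The system MaxSAT resolution $+$ cost-SR is sound: if from a MaxSAT instance with satisfiable hard clauses $H_0=\{C_1\lor b_1,\dots,C_m\lor b_m\}$ and soft clauses $S_0=\{\lnot b_1,\dots,\lnot b_m\}$ there is a MaxSAT resolution $+$ cost-SR derivation $(H_0,S_0),\dots,(H_t,S_t)$ such that $S_t$ contains the empty clause $\bot$ with multiplicity $k$, then every assignment satisfying $H_0$ falsifies at least $k$ clauses of $S_0$; equivalently $\mathrm{cost}(H_0)\ge k$.
   Context: $b_1,\dots,b_m$ are distinct blocking variables not occurring in $C_1,\dots,C_m$; $\mathrm{cost}(\alpha)=\sum_i\alpha(b_i)$, $\mathrm{cost}(H)=\min\{\mathrm{cost}(\alpha):\alpha\text{ total},\alpha\models H\}$. Notation: substitutions map variables to $0,1$ or literals ($\sigma(\lnot x)=\lnot\sigma(x)$); $(\sigma\circ\tau)(x)=\sigma(\tau(x))$; $C{\upharpoonright}_\sigma$ and $\Gamma{\upharpoonright}_\sigma$ denote restriction (clauses set to $1$ removed); $\lnot C$ is the partial assignment falsifying all literals of $C$; $\Gamma\vdash_1 C$ means unit propagation on $\Gamma{\upharpoonright}_{\lnot C}$ derives $\bot$, and $\Gamma\vdash_1\Delta$ means this for all $D\in\Delta$. $C$ is cost-SR w.r.t. $\Gamma$ if some substitution $\sigma$ satisfies (1) $\Gamma{\upharpoonright}_{\lnot C}\vdash_1(\Gamma\cup\{C\}){\upharpoonright}_\sigma$ and (2) $\mathrm{cost}(\tau\circ\sigma)\le\mathrm{cost}(\tau)$ for all total $\tau\supseteq\lnot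 C$. A MaxSAT resolution $+$ cost-SR derivation is a sequence of pairs of multisets $(H_i,S_i)$ where each step is one of: (a) $S_i=S_{i-1}$, $H_i=H_{i-1}\cup\{C\}$ with $C$ obtained by resolution (or weakening) from $H_{i-1}$; (a') $S_i=S_{i-1}$, $H_i=H_{i-1}\cup\{C\}$ with $C$ cost-SR w.r.t. $H_{i-1}$; (b) $S_i=S_{i-1}\cup\{C\}$ for some $C\in H_{i-1}$, $H_i=H_{i-1}$; (c) $S_i=S_{i-1}\setminus\{C\}\cup\{C\lor x,C\lor\lnot x\}$ for $C\in S_{i-1}$, $H_i=H_{i-1}$; (d) $S_i=S_{i-1}\setminus\{C\lor x,C\lor\lnot x\}\cup\{C\}$ for $\{C\lor x,C\lor\lnot x\}\subseteq S_{i-1}$, $H_i=H_{i-1}$. *)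

From HB Require Import structures.
From mathcomp Require Import all_boot.
From mathcomp Require Import finmap.

Set Implicit Arguments.
Unset Strict Implicit.
Unset Printing Implicit Defensive.

Local Open Scope fset_scope.

(** Variables are natural numbers.  A literal is a pair (x, p): (x, true) is
    the positive literal x, (x, false) is the negative literal ~x. *)
Definition lit := (nat * bool)%type.
Definition lneg (l : lit) : lit := (l.1, ~~ l.2).

(** A clause is a finite set of literals; the empty clause is fset0 (= bot). *)
Definition clause := {fset lit}.

(** Multisets of clauses are represented by sequences (compared up to
    permutation with perm_eq). *)
Definition cmset := seq clause.

Definition assignment := nat -> bool.
Definition sat_lit (a : assignment) (l : lit) : bool := a l.1 == l.2.
Definition sat_clause (a : assignment) (C : clause) : bool :=
  has (sat_lit a) (enum_fset C).
Definition sat_cnf (a : assignment) (G : cmset) : bool :=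
  all (sat_clause a) G.

Inductive sval := SConst of bool | SLit of lit.
Definition substitution := nat -> sval.

Definition sval_neg (s : sval) : sval :=
  match s with SConst b => SConst (~~ b) | SLit l => SLit (lneg l) end.

Definition sub_lit (s : substitution) (l : lit) : sval :=
  if l.2 then s l.1 else sval_neg (s l.1).

Definition sval_is_true (v : sval) : bool :=
  if v is SConst true then true else false.
Definition sval_lit (v : sval) : option lit :=
  if v is SLit l then Some l else None.

(** Restriction C|sigma: None if some literal is set to 1 (the clause is
    removed); otherwise literals set to 0 are dropped and the others are
    replaced by their images. *)
Definition restrict_clause (s : substitution) (C : clause) : option clause :=
  if has (fun l => sval_is_true (sub_lit s l)) (enum_fset C) then None
  else Some [fset l' | l' in pmap (fun l => sval_lit (sub_lit s l)) (enum_fset C)].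

Definition restrict (s : substitution) (G : cmset) : cmset :=
  pmap (restrict_clause s) G.

Definition passignment := nat -> option bool.
Definition subst_of_pa (r : passignment) : substitution :=
  fun x => match r x with Some b => SConst b | None => SLit (x, true) end.

(** ~C : the partial assignment falsifying all literals of C (for a
    tautological C the positive occurrence takes priority; this convention is
    irrelevant). *)
Definition negc (C : clause) : passignment :=
  fun x => if (x, true) \in C then Some false
           else if (x, false) \in C then Some true else None.

Definition assign_lit (l : lit) : passignment :=
  fun x => if x == l.1 then Some l.2 else None.

Inductive up_refutes : cmset -> Prop :=
| up_bot F : fset0 \in F -> up_refutes F
| up_unit F (l : lit) : [fset l] \in F ->
    up_refutes (restrict (subst_of_pa (assign_lit l)) F) -> up_refutes F.

Definition up_derives (G : cmset) (D : clause) : Prop :=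
  up_refutes (restrict (subst_of_pa (negc D)) G).

Definition extends (t : assignment) (r : passignment) : Prop :=
  forall x b, r x = Some b -> t x = b.

Definition eval_sval (t : assignment) (v : sval) : bool :=
  match v with SConst b => b | SLit l => sat_lit t l end.

Definition comp_as (t : assignment) (s : substitution) : assignment :=
  fun x => eval_sval t (s x).

Definition cost (m : nat) (b : 'I_m -> nat) (a : assignment) : nat :=
  \sum_(i < m) (a (b i) : nat).

Definition cost_SR (m : nat) (b : 'I_m -> nat) (G : cmset) (C : clause) : Prop :=
  exists s : substitution,
    (forall D, D \in restrict s (C :: G) ->
       up_derives (restrict (subst_of_pa (negc C)) G) D) /\
    (forall t : assignment, extends t (negc C) ->
       cost b (comp_as t s) <= cost b t).

Definition res_or_weak (G : cmset) (C : clause) : Prop :=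
  (exists D1 D2 (x : nat), [/\ D1 \in G, D2 \in G, (x, true) \in D1,
      (x, false) \in D2 & C = (D1 `\ (x, true)) `|` (D2 `\ (x, false))])
  \/ (exists D, D \in G /\ D `<=` C).

Definition step (m : nat) (b : 'I_m -> nat) (HS HS' : cmset * cmset) : Prop :=
  let: (Hh, Ss) := HS in let: (Hh', Ss') := HS' in
  ( perm_eq Ss' Ss /\ (exists C, res_or_weak Hh C /\ perm_eq Hh' (C :: Hh))) \/
      (perm_eq Ss' Ss /\ (exists C, cost_SR b Hh C /\ perm_eq Hh' (C :: Hh))) \/
      (perm_eq Hh' Hh /\ (exists C, C \in Hh /\ perm_eq Ss' (C :: Ss))) \/
      (perm_eq Hh' Hh /\ (exists (C : clause) (x : nat) (R : cmset),
         perm_eq Ss (C :: R) /\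
         perm_eq Ss' (((x, true) |` C) :: ((x, false) |` C) :: R))) \/
      (perm_eq Hh' Hh /\ (exists (C : clause) (x : nat) (R : cmset),
         perm_eq Ss (((x, true) |` C) :: ((x, false) |` C) :: R) /\
         perm_eq Ss' (C :: R))).

Definition H0 (m : nat) (C : 'I_m -> clause) (b : 'I_m -> nat) : cmset :=
  [seq (b i, true) |` C i | i <- enum 'I_m].
Definition S0 (m : nat) (b : 'I_m -> nat) : cmset :=
  [seq [fset (b i, false)] | i <- enum 'I_m].

(** Two invariants hold along the derivation (H_i, S_i).  First, every model
    of H_0 can be traded for a model of H_i of no larger cost: resolvents and
    weakenings are implied, and a model falsifying a cost-SR clause C is
    composed with the witness substitution, which by the unit-propagation
    condition gives a model of H_i and C, and by the cost condition is no
    more expensive.  Second, every model of H_i falsifies as many clauses of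
    S_i as of S_0, i.e. its cost: the soft steps preserve this count, and the
    clauses moved into S_i are hard.  A model of H_t falsifies the k copies
    of the empty clause in S_t, so its cost is at least k. *)

From HB Require Import structures.
From mathcomp Require Import all_boot finmap.

Set Implicit Arguments.
Unset Strict Implicit.
Unset Printing Implicit Defensive.

Local Open Scope fset_scope.

Lemma sat_clauseP a (C : clause) :
  reflect (exists2 l, l \in C & sat_lit a l) (sat_clause a C).
Proof. exact: hasP. Qed.

Lemma sat_clause0 a : ~~ sat_clause a fset0.
Proof. by apply/sat_clauseP => -[l]; rewrite in_fset0. Qed.

Lemma sat_clause1 a l : sat_clause a [fset l] = sat_lit a l.
Proof.
apply/sat_clauseP/idP => [[l']|sl]; last by exists l; rewrite ?in_fset1.
by rewrite in_fset1 => /eqP ->.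
Qed.

Lemma sat_clauseU1 a l (C : clause) :
  sat_clause a (l |` C) = sat_lit a l || sat_clause a C.
Proof.
apply/sat_clauseP/orP => [[l']|[sl|/sat_clauseP [l' l'C sl']]].
- rewrite in_fset1U => /orP [/eqP -> | l'C sl']; first by left.
  by right; apply/sat_clauseP; exists l'.
- by exists l; rewrite ?fset1U1.
- by exists l'; rewrite ?fset1Ur.
Qed.

Lemma sat_cnf_perm a (G G' : cmset) : perm_eq G G' -> sat_cnf a G = sat_cnf a G'.
Proof. exact: perm_all. Qed.

Lemma sat_cnf_sub a (G G' : cmset) :
  {subset G <= G'} -> sat_cnf a G' -> sat_cnf a G.
Proof. by move=> sGG' /allP aG'; apply/allP => D /sGG' /aG'. Qed.

Lemma eq_sat_cnf a a' (G : cmset) : a =1 a' -> sat_cnf a G = sat_cnf a' G.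
Proof. by move=> eq_a; apply: eq_all => D; apply: eq_has => l; rewrite /sat_lit eq_a. Qed.

Lemma eval_sval_neg t v : eval_sval t (sval_neg v) = ~~ eval_sval t v.
Proof. by case: v => [|[x p]] //=; rewrite /sat_lit /=; case: (t x); case: p. Qed.

Lemma sat_lit_comp t s l : sat_lit (comp_as t s) l = eval_sval t (sub_lit s l).
Proof.
case: l => x [|]; rewrite /sat_lit /sub_lit /comp_as /=; first by case: eval_sval.
by rewrite eval_sval_neg; case: eval_sval.
Qed.

Lemma sat_clause_comp t s (E : clause) :
  sat_clause (comp_as t s) E =
  if restrict_clause s E is Some E' then sat_clause t E' else true.
Proof.
rewrite /restrict_clause; case: hasP => [[l lE l_true] | no_true].
  apply/sat_clauseP; exists l; rewrite // sat_lit_comp.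
  by move: l_true; case: sub_lit => // -[].
apply/sat_clauseP/sat_clauseP => -[l].
  move=> lE; rewrite sat_lit_comp; case e: (sub_lit s l) => [[] | l'] //= sl'.
    by case: no_true; exists l; rewrite // e.
  by exists l'; rewrite // inE mem_pmap; apply/mapP; exists l; rewrite ?e.
rewrite inE mem_pmap => /mapP [l0 l0E e] sl; exists l0; rewrite // sat_lit_comp.
by case: (sub_lit s l0) e => // l1 [<-].
Qed.

Lemma sat_cnf_comp t s (G : cmset) :
  sat_cnf (comp_as t s) G = sat_cnf t (restrict s G).
Proof.
elim: G => //= E G IH; rewrite /sat_cnf /= -!/(sat_cnf _ _) IH sat_clause_comp.
by case: restrict_clause.
Qed.

Lemma comp_as_pa t r : extends t r -> comp_as t (subst_of_pa r) =1 t.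
Proof.
move=> t_r x; rewrite /comp_as /subst_of_pa; case rx: (r x) => [bx|] /=.
  by rewrite (t_r _ _ rx).
by rewrite /sat_lit /=; case: (t x).
Qed.

Lemma sat_cnf_restrict_pa t r (G : cmset) :
  extends t r -> sat_cnf t (restrict (subst_of_pa r) G) = sat_cnf t G.
Proof. by move=> t_r; rewrite -sat_cnf_comp (eq_sat_cnf _ (comp_as_pa t_r)). Qed.

Lemma extends_assign_lit t l : sat_lit t l -> extends t (assign_lit l).
Proof. by move=> /eqP tl x bx; rewrite /assign_lit; case: eqP => // -> [<-]. Qed.

Lemma extends_negc t (D : clause) : ~~ sat_clause t D -> extends t (negc D).
Proof.
move=> /sat_clauseP unsatD x bx; rewrite /negc.
have unsat_x p : (x, p) \in D -> t x = ~~ p.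
  move=> xD; have /negP : ~~ sat_lit t (x, p) by apply/negP => tx; apply: unsatD; exists (x, p).
  by rewrite /sat_lit /=; case: (t x); case: (p).
case: ifP => [/unsat_x -> [<-] // | _].
by case: ifP => // /unsat_x -> [<-].
Qed.

Lemma up_refutes_unsat (F : cmset) t : up_refutes F -> ~~ sat_cnf t F.
Proof.
move=> refF; elim: refF t => {F} [F botF | F l unitF _ IH] t.
  by apply/allP => /(_ _ botF); apply/negP/sat_clause0.
apply/negP => satF; have /allP /(_ _ unitF) := satF; rewrite sat_clause1 => tl.
by move: (IH t); rewrite sat_cnf_restrict_pa ?satF //; apply: extends_assign_lit.
Qed.

Lemma up_derives_sound (G : cmset) (D : clause) a :
  up_derives G D -> sat_cnf a G -> sat_clause a D.
Proof.
move=> derD satG; apply/negPn/negP => /extends_negc a_negD.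
by move: (up_refutes_unsat a derD); rewrite sat_cnf_restrict_pa ?satG.
Qed.

Lemma res_or_weak_sound (G : cmset) (C : clause) a :
  res_or_weak G C -> sat_cnf a G -> sat_clause a C.
Proof.
move=> [[D1 [D2 [x [D1G D2G xD1 xD2 ->]]]] | [D [DG subDC]]] /allP satG.
  have /sat_clauseP [l1 l1D1 sl1] := satG _ D1G.
  have /sat_clauseP [l2 l2D2 sl2] := satG _ D2G.
  apply/sat_clauseP; case ax: (a x).
    exists l2; rewrite // in_fsetU !in_fsetD1 l2D2 andbT; apply/orP; right.
    by apply/eqP => e; move: sl2; rewrite e /sat_lit ax.
  exists l1; rewrite // in_fsetU !in_fsetD1 l1D1 andbT; apply/orP; left.
  by apply/eqP => e; move: sl1; rewrite e /sat_lit ax.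
have /sat_clauseP [l lD sl] := satG _ DG.
by apply/sat_clauseP; exists l; first exact: (fsubsetP subDC).
Qed.

Lemma cost_SR_sound m (b : 'I_m -> nat) (G : cmset) (C : clause) a :
  cost_SR b G C -> sat_cnf a G ->
  exists2 a', sat_cnf a' (C :: G) & cost b a' <= cost b a.
Proof.
move=> [s [derives cost_le]] satG.
have [satC | /extends_negc a_negC] := boolP (sat_clause a C).
  by exists a; rewrite //= satC.
exists (comp_as a s); last exact: cost_le.
rewrite sat_cnf_comp; apply/allP => D /derives /up_derives_sound; apply.
by rewrite sat_cnf_restrict_pa.
Qed.

Definition num_falsified (a : assignment) (S : cmset) : nat :=
  count (fun D => ~~ sat_clause a D) S.

Lemma num_falsified_perm a (S S' : cmset) :
  perm_eq S S' -> num_falsified a S = num_falsified a S'.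
Proof. by rewrite /num_falsified => /permP ->. Qed.

Lemma num_falsified_split a x (C : clause) (R : cmset) :
  num_falsified a [:: (x, true) |` C, (x, false) |` C & R] =
  num_falsified a (C :: R).
Proof.
rewrite /num_falsified /= addnA !sat_clauseU1 /sat_lit /=.
by case: (a x); case: sat_clause.
Qed.

Lemma count_bot_le_num_falsified a (S : cmset) :
  count_mem fset0 S <= num_falsified a S.
Proof. by apply: sub_count => D /eqP ->; apply: sat_clause0. Qed.

Lemma num_falsified_S0 m (b : 'I_m -> nat) a : num_falsified a (S0 b) = cost b a.
Proof.
rewrite /num_falsified /S0 /cost count_map -big_enum /= -sum1_count big_mkcond /=.
by apply: eq_bigr => i _; rewrite sat_clause1 /sat_lit; case: (a (b i)).
Qed.

Section Step.

Variables (m : nat) (b : 'I_m -> nat) (H S H' S' : cmset).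
Hypothesis hstep : step b (H, S) (H', S').

Lemma step_hard_subset : {subset H <= H'}.
Proof.
have add C : perm_eq H' (C :: H) -> {subset H <= H'}.
  by move=> pH D DH; rewrite (perm_mem pH) inE DH orbT.
have keep : perm_eq H' H -> {subset H <= H'} by move=> pH D; rewrite (perm_mem pH).
by case: hstep => [[_ [C [_ /add]]] | [[_ [C [_ /add]]] | [[/keep] | [[/keep] | [/keep]]]]].
Qed.

Lemma step_cheaper_model a :
  sat_cnf a H -> exists2 a', sat_cnf a' H' & cost b a' <= cost b a.
Proof.
move=> satH.
have keep : perm_eq H' H -> exists2 a', sat_cnf a' H' & cost b a' <= cost b a.
  by move=> pH; exists a; rewrite ?(sat_cnf_perm _ pH).
case: hstep => [[_ [C [/res_or_weak_sound satC pH]]] | [[_ [C [/cost_SR_sound costC pH]]] |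
                [[/keep] | [[/keep] | [/keep]]]]] //.
  by exists a; rewrite // (sat_cnf_perm _ pH) /= satC.
by have [a' satCH le_a'] := costC a satH; exists a'; rewrite ?(sat_cnf_perm _ pH).
Qed.

Lemma step_num_falsified a : sat_cnf a H -> num_falsified a S' = num_falsified a S.
Proof.
move=> /allP satH.
case: hstep => [[pS _] | [[pS _] | [[_ [C [CH pS]]] |
                [[_ [C [x [R [pS pS']]]]] | [_ [C [x [R [pS pS']]]]]]]]].
- exact: num_falsified_perm.
- exact: num_falsified_perm.
- by rewrite (num_falsified_perm _ pS) /num_falsified /= satH.
- by rewrite (num_falsified_perm _ pS) (num_falsified_perm _ pS') num_falsified_split.
- by rewrite (num_falsified_perm _ pS) (num_falsified_perm _ pS') num_falsified_split.
Qed.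

End Step.

Section Derivation.

Variables (m : nat) (b : 'I_m -> nat) (d : nat -> cmset * cmset) (t : nat).
Hypothesis d_steps : forall i, i < t -> step b (d i) (d i.+1).

Let d_step i : i < t -> step b ((d i).1, (d i).2) ((d i.+1).1, (d i.+1).2).
Proof. by move=> /d_steps; case: (d i) => H S; case: (d i.+1). Qed.

Lemma derivation_cheaper_model j a : j <= t -> sat_cnf a (d 0).1 ->
  exists2 a', sat_cnf a' (d j).1 & cost b a' <= cost b a.
Proof.
elim: j => [_ sat0 | j IH lt_jt sat0]; first by exists a.
have [a' sat_j le_a'] := IH (ltnW lt_jt) sat0.
have [a'' sat_j1 le_a''] := step_cheaper_model (d_step lt_jt) sat_j.
by exists a''; last exact: leq_trans le_a'.
Qed.

Lemma derivation_num_falsified j a : j <= t -> sat_cnf a (d j).1 ->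
  num_falsified a (d j).2 = num_falsified a (d 0).2.
Proof.
elim: j => // j IH lt_jt sat_j1.
have sat_j := sat_cnf_sub (step_hard_subset (d_step lt_jt)) sat_j1.
by rewrite (step_num_falsified (d_step lt_jt) sat_j) IH // ltnW.
Qed.

End Derivation.

Theorem theorem7p4 (m : nat) (C : 'I_m -> clause) (b : 'I_m -> nat)
  (b_inj : injective b)
  (b_fresh : forall i j (l : lit), l \in C j -> l.1 <> b i)
  (H0_sat : exists a : assignment, sat_cnf a (H0 C b))
  (d : nat -> cmset * cmset) (t k : nat)
  (d_start : d 0 = (H0 C b, S0 b))
  (d_steps : forall i, i < t -> step b (d i) (d i.+1))
  (d_end : count_mem fset0 (d t).2 = k) :
  forall a : assignment, sat_cnf a (H0 C b) ->
    k <= count (fun D => ~~ sat_clause a D) (S0 b).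
Proof.
move=> a sat_a.
have sat0 : sat_cnf a (d 0).1 by rewrite d_start.
have [a' sat_a' le_a'] := derivation_cheaper_model d_steps (leqnn t) sat0.
rewrite -[count _ _]/(num_falsified a (S0 b)) num_falsified_S0 -d_end.
apply: leq_trans (count_bot_le_num_falsified a' _) _.
by rewrite (derivation_num_falsified d_steps (leqnn t) sat_a') d_start num_falsified_S0.
Qed.
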